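(* Let $\tau$ be a row-standard tableau. Then there exists a sequence of integers $i_1,\dots,i_m$ such that $\mathrm{st}(\tau)=\delta_{i_1}\cdots\delta_{i_m}(\tau)$ (each $\delta_{i_k}$ being applied to a tableau lying in $D_{i_k}$), and $n_{\mathrm{inv}}(\tau)$ is the minimal length $m$ of such a sequence.
   Context: Fix a Young diagram $Y$ with $n$ boxes. A row-standard tableau of shape $Y$ is a bijective numbering of its boxes by $1,\dots,n$ increasing left to right along rows; it is standard if also increasing top to bottom along columns. The standardization $\mathrm{st}(\tau)$ of a row-standard $\tau$ is the standard tableau obtained by rearranging the entries of each column of $\tau$ in increasing order from top to bottom. An inversion of $\tau$ is a pair $i<j$ in the same column such that either (i) $i$ or $j$ has no box immediately to its right and $i$ is below $j$, or (ii) $i,j$ have right neighbours $i',j'$ with $i'>j'$; $n_{\mathrm{inv}}(\tau)$ is their number. For $i\in\{1,\dots,n\}$, $D_i$ is the set of row-standard $\tau$ such that: (1) $i$ is not in the first row, and letting $j$ be the entry immediately above $i$: (2) if $i$ has a right neighbour $i'$ then $j<i'$, and if $j$ has a right neighbour $j'$ then $i<j'$; (3) for every $k$ in the same column as $i,j$ with $\min(i,j)<k<\max(i,j)$, exactly one of $(\min(i,j),k)$, $(k,\max(i,j))$ is an inversion. For $\tau\in D_i$, with $i_1<\dots<i_q=i$ the entries of the row of $i$ up to $i$ and $j_1<\dots<j_q=j$ those of the row of $j$ up to $j$, $\delta_i(\tau)$ is obtained by swapping $i_k$ and $j_k$ for all $k\le q$. *)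

From mathcomp Require Import all_boot.
Set Implicit Arguments. Unset Strict Implicit. Unset Printing Implicit Defensive.

(* A Young diagram is given by its row lengths, top row first:
   a weakly decreasing sequence of positive integers. *)
Definition is_partition (lam : seq nat) : bool :=
  sorted geq lam && all (fun k => 0 < k) lam.

(* A tableau is the list of its rows (top to bottom), each row read left to right.
   Box (r, c) holds  nth 0 (nth [::] t r) c. *)
Definition tableau := seq (seq nat).

Definition row_standard (lam : seq nat) (t : tableau) : bool :=
  [&& shape t == lam,
      perm_eq (flatten t) (iota 1 (sumn lam)) &
      all (sorted ltn) t].

Definition rowof (t : tableau) (x : nat) : nat := find (fun row => x \in row) t.
Definition rowseq (t : tableau) (r : nat) : seq nat := nth [::] t r.
Definition colof (t : tableau) (x : nat) : nat := index x (rowseq t (rowof t x)).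
Definition entry (t : tableau) (r c : nat) : nat := nth 0 (rowseq t r) c.

Definition has_right (t : tableau) (x : nat) : bool :=
  (colof t x).+1 < size (rowseq t (rowof t x)).
Definition right_nb (t : tableau) (x : nat) : nat :=
  entry t (rowof t x) (colof t x).+1.

Definition same_col (t : tableau) (a b : nat) : bool :=
  [&& a \in flatten t, b \in flatten t & colof t a == colof t b].

Definition is_inv (t : tableau) (a b : nat) : bool :=
  [&& a < b, same_col t a b &
      ((~~ has_right t a || ~~ has_right t b) && (rowof t b < rowof t a))
      || [&& has_right t a, has_right t b & right_nb t b < right_nb t a]].

Definition n_inv (t : tableau) : nat :=
  count (fun p => is_inv t p.1 p.2) [seq (a, b) | a <- flatten t, b <- flatten t].

Definition colseq (t : tableau) (c : nat) : seq nat :=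
  [seq nth 0 row c | row <- t & c < size row].

Definition st (t : tableau) : tableau :=
  mkseq (fun r => mkseq (fun c => nth 0 (sort leq (colseq t c)) r)
                        (size (rowseq t r))) (size t).

Definition in_D (i : nat) (t : tableau) : bool :=
  let r := rowof t i in
  let c := colof t i in
  let j := entry t r.-1 c in
  let lo := minn i j in
  let hi := maxn i j in
  [&& i \in flatten t, 0 < r,
      has_right t i ==> (j < right_nb t i),
      has_right t j ==> (i < right_nb t j) &
      all (fun k => (lo < k < hi) ==> (is_inv t lo k (+) is_inv t k hi))
          (colseq t c)].

Definition delta (i : nat) (t : tableau) : tableau :=
  let r := rowof t i in
  let c := colof t i in
  let R := rowseq t r in
  let U := rowseq t r.-1 in
  mkseq (fun s =>
     if s == r then take c.+1 U ++ drop c.+1 R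
     else if s == r.-1 then take c.+1 R ++ drop c.+1 U
     else rowseq t s) (size t).

(* apply_deltas [:: i_1; ...; i_m] t = Some (delta_{i_1} (... (delta_{i_m} t)))
   provided each delta_{i_k} is applied to a tableau lying in D_{i_k};
   None otherwise. *)
Fixpoint apply_deltas (s : seq nat) (t : tableau) : option tableau :=
  match s with
  | [::] => Some t
  | i :: s' =>
      match apply_deltas s' t with
      | Some u => if in_D i u then Some (delta i u) else None
      | None => None
      end
  end.

(* The proof rests on one computation (section Delta): for t in D_i, with j
   the entry above i, the move delta_i exchanges the rows of i and j (and
   their right neighbours), leaves every other entry in its column with the
   same right neighbour, and reverses the relative order of i and j only.
   Condition (3) of D_i makes every entry strictly between i and j compare
   alike with both, so the inversions involving a third entry are merely
   redistributed; hence n_inv changes by exactly one, decreasing iff {i, j}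
   is an inversion (n_inv_delta).  Moreover delta_i keeps the tableau
   well-formed and permutes entries within columns, so st is invariant.
   - Lower bound: along any admissible sequence n_inv drops by at most one
     per move, and st(t), having sorted columns, has no inversion.
   - Upper bound: if t is not column-sorted, the lower entry i of a descent
     in the rightmost unsorted column lies in D_i and forms an inversion with
     the entry above it, so delta_i decreases n_inv by one; a column-sorted
     tableau is its own standardization. *)

From mathcomp Require Import all_boot zify.
Set Implicit Arguments. Unset Strict Implicit. Unset Printing Implicit Defensive.

(* A tableau with the structural properties of a row-standard tableau that
   the proof actually uses: decreasing row lengths, distinct positive
   entries, increasing rows.  These are preserved by every delta_i. *)
Definition wellformed (t : tableau) : bool :=
  [&& sorted geq (shape t), uniq (flatten t), 0 \notin flatten t &
      all (sorted ltn) t].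

Lemma row_standard_wellformed lam t :
  is_partition lam -> row_standard lam t -> wellformed t.
Proof.
move=> /andP [Hlam _] /and3P [/eqP Hshape Hperm Hrows].
rewrite -Hshape in Hlam.
by rewrite /wellformed Hlam Hrows (perm_uniq Hperm) iota_uniq (perm_mem Hperm) mem_iota.
Qed.

Lemma mem_rowseq_flatten t r x : x \in rowseq t r -> x \in flatten t.
Proof.
rewrite /rowseq => Hx; have Hr : r < size t by case: ltnP => // ?; move: Hx; rewrite nth_default.
by apply/flattenP; exists (nth [::] t r) => //; apply: mem_nth.
Qed.

Lemma rowof_rowseq t r x : uniq (flatten t) -> r < size t -> x \in rowseq t r ->
  rowof t x = r.
Proof.
rewrite /rowof /rowseq; elim: t r => [|row t IH] [|r] //=; first by move=> _ _ ->.
rewrite cat_uniq => /and3P [_ Hdisj Hu] Hr Hx.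
have -> : (x \in row) = false.
  by apply/negP => Hrow; move/hasP: Hdisj; apply; exists x => //; exact: mem_rowseq_flatten Hx.
by rewrite (IH r).
Qed.

Lemma uniq_rowseq t r : uniq (flatten t) -> uniq (rowseq t r).
Proof.
rewrite /rowseq; elim: t r => [|row t IH] [|r] //=; rewrite cat_uniq => /and3P [? _ ?] //.
exact: IH.
Qed.

Lemma pos_entry t r c : uniq (flatten t) -> r < size t -> c < size (rowseq t r) ->
  rowof t (entry t r c) = r /\ colof t (entry t r c) = c.
Proof.
move=> Hu Hr Hc; have Hrow := rowof_rowseq Hu Hr (mem_nth 0 Hc).
by split=> //; rewrite /colof Hrow /entry index_uniq //; exact: uniq_rowseq.
Qed.

Lemma flatten_pos t x : x \in flatten t ->
  [/\ rowof t x < size t, colof t x < size (rowseq t (rowof t x)) &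
      entry t (rowof t x) (colof t x) = x].
Proof.
move=> /flattenP [row Hrow Hx].
have Hh : has (fun row => x \in row) t by apply/hasP; exists row.
have Hin : x \in rowseq t (rowof t x) by exact: (nth_find [::] Hh).
split; [by rewrite /rowof -has_find | by rewrite /colof index_mem |].
by rewrite /entry /colof nth_index.
Qed.

Lemma entry_mem t r c : r < size t -> c < size (rowseq t r) -> entry t r c \in flatten t.
Proof. by move=> Hr Hc; apply: (@mem_rowseq_flatten t r); exact: mem_nth. Qed.

Lemma entry_inj t r1 c1 r2 c2 : uniq (flatten t) ->
  r1 < size t -> c1 < size (rowseq t r1) -> r2 < size t -> c2 < size (rowseq t r2) ->
  entry t r1 c1 = entry t r2 c2 -> r1 = r2 /\ c1 = c2.
Proof.
move=> Hu H1 H2 H3 H4 He.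
have [A B] := pos_entry Hu H1 H2; have [C D] := pos_entry Hu H3 H4.
by split; [rewrite -A He C | rewrite -B He D].
Qed.

Lemma size_rowseq_mono t r1 r2 : sorted geq (shape t) -> r1 <= r2 ->
  size (rowseq t r2) <= size (rowseq t r1).
Proof.
move=> Hs Hle; case: (ltnP r2 (size t)) => Hr2; last by rewrite /rowseq nth_default.
have Hr1 : r1 < size t by apply: leq_ltn_trans Hr2.
have := sorted_leq_nth (fun y x z (H1 : geq x y) (H2 : geq y z) => leq_trans H2 H1)
  (@leqnn) 0 Hs => /(_ r1 r2); rewrite !inE size_map => /(_ Hr1 Hr2 Hle).
by rewrite !(nth_map [::]).
Qed.

Lemma entry_row_lt t s d1 d2 : all (sorted ltn) t -> d1 < d2 -> d2 < size (rowseq t s) ->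
  entry t s d1 < entry t s d2.
Proof.
move=> Hrows H12 H2.
have Hs : s < size t by case: ltnP => // ?; move: H2; rewrite /rowseq nth_default.
have Hso : sorted ltn (rowseq t s) by apply: (allP Hrows); apply: mem_nth.
by apply: (sorted_ltn_nth ltn_trans 0 Hso) => //; rewrite inE; apply: ltn_trans H2.
Qed.

Definition after (t : tableau) (a b : nat) : bool :=
  if has_right t a && has_right t b then right_nb t b < right_nb t a
  else rowof t b < rowof t a.

Lemma is_invE t a b : is_inv t a b = [&& a < b, same_col t a b & after t a b].
Proof.
rewrite /is_inv /after.
by case: (has_right t a); case: (has_right t b); rewrite /= ?orbF ?andbT.
Qed.

Lemma is_inv_irrefl t a : is_inv t a a = false.
Proof. by rewrite /is_inv ltnn. Qed.

Lemma after_antisym t a b : uniq (flatten t) -> a \in flatten t -> b \in flatten t ->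
  a != b -> colof t a = colof t b -> after t b a = ~~ after t a b.
Proof.
move=> Hu Ha Hb Hab Hc.
have [A1 A2 A3] := flatten_pos Ha; have [B1 B2 B3] := flatten_pos Hb.
have Hr : rowof t a != rowof t b.
  by apply: contraNneq Hab => E; rewrite -A3 -B3 E Hc.
rewrite /after andbC.
case Hha: (has_right t a); case Hhb: (has_right t b) => /=; try lia.
have Hn : right_nb t a != right_nb t b.
  apply: contraNneq Hr => E.
  by have [-> _] := entry_inj Hu A1 Hha B1 Hhb E.
lia.
Qed.

Lemma count_allpairs (T1 T2 : Type) (p : pred (T1 * T2)) (f : seq T1) (g : seq T2) :
  count p [seq (a, b) | a <- f, b <- g] = \sum_(a <- f) \sum_(b <- g) p (a, b).
Proof.
elim: f => [|a f IH] /=; first by rewrite big_nil.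
rewrite count_cat IH big_cons count_map; congr (_ + _).
by elim: {IH} g => [|b g IHg] /=; rewrite ?big_nil ?big_cons ?IHg.
Qed.

Lemma n_invE t : n_inv t = \sum_(a <- flatten t) \sum_(b <- flatten t) is_inv t a b.
Proof. exact: count_allpairs. Qed.

Lemma sum2_split (T : eqType) (Q : T -> T -> nat) (f : seq T) i j :
  uniq f -> i \in f -> j \in f -> i != j ->
  \sum_(a <- f) \sum_(b <- f) Q a b =
  Q i i + Q j j + (Q i j + Q j i) +
  \sum_(k <- [seq x <- f | (x != i) && (x != j)]) (Q i k + Q k i + Q j k + Q k j) +
  \sum_(a <- [seq x <- f | (x != i) && (x != j)])
     \sum_(b <- [seq x <- f | (x != i) && (x != j)]) Q a b.
Proof.
move=> Hu Hi Hj Hij; set F := [seq x <- f | _].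
have Hp : perm_eq f (i :: j :: F).
  apply: uniq_perm => //.
    by rewrite /= inE negb_or Hij /F !mem_filter !eqxx /= andbF filter_uniq.
  move=> x; rewrite !inE /F mem_filter.
  by case: (eqVneq x i) => [->|_] //; case: (eqVneq x j) => [->|_].
rewrite (perm_big _ Hp) /=.
under eq_bigr => a _ do rewrite (perm_big _ Hp) /= !big_cons.
rewrite !big_cons !big_split /=; lia.
Qed.

(* The counting identity behind the invariance of the inversions involving a
   third entry k when the roles of i and j are exchanged: it holds as soon as
   k relates in the same way to i and j whenever k lies strictly between them. *)
Lemma swap_count (i j k : nat) (ai aj : bool) : i != j -> k != i -> k != j ->
  (minn i j < k < maxn i j -> ai = aj) ->
  ((i < k) && aj : nat) + (k < i) && ~~ aj + (j < k) && ai + (k < j) && ~~ ai =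
  ((i < k) && ai : nat) + (k < i) && ~~ ai + (j < k) && aj + (k < j) && ~~ aj.
Proof.
move=> Hij Hki Hkj Hbetween.
case: (eqVneq ai aj) => [-> // | Hne].
have [/andP [Hi Hj] | /andP [Hi Hj]] : (k < i) && (k < j) \/ (i < k) && (j < k).
  by have := contra_neq Hbetween Hne; lia.
- have -> : (i < k) = false by lia.
  have -> : (j < k) = false by lia.
  by rewrite Hi Hj /=; lia.
- have -> : (k < i) = false by lia.
  have -> : (k < j) = false by lia.
  by rewrite Hi Hj /=; lia.
Qed.

Lemma colseq_subseq t d : subseq (colseq t d) (flatten t).
Proof.
elim: t => [|row t IH] //=; rewrite /colseq /=; case: ifP => Hd /=.
  by rewrite -cat1s; apply: cat_subseq => //; rewrite sub1seq mem_nth.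
by rewrite -[X in subseq X _]cat0s; apply: cat_subseq; [exact: sub0seq | exact: IH].
Qed.

Lemma mem_colseqE t d x : uniq (flatten t) ->
  (x \in colseq t d) = (x \in flatten t) && (colof t x == d).
Proof.
move=> Hu; apply/idP/andP => [|[Hx /eqP <-]].
  move=> /mapP [row]; rewrite mem_filter => /andP [Hd Hrow] ->.
  have Hs : index row t < size t by rewrite index_mem.
  have Er : rowseq t (index row t) = row by rewrite /rowseq nth_index.
  have Hd' : d < size (rowseq t (index row t)) by rewrite Er.
  have [_ Hc] := pos_entry Hu Hs Hd'; have Hm := entry_mem Hs Hd'.
  by rewrite /entry Er in Hc Hm; split => //; apply/eqP.
have [P1 P2 P3] := flatten_pos Hx.
apply/mapP; exists (rowseq t (rowof t x)) => //.
by rewrite mem_filter P2 /=; apply: mem_nth.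
Qed.

Lemma flatten_perm2 (t t' : tableau) r : 0 < r -> r < size t -> size t' = size t ->
  (forall s, s != r.-1 -> s != r -> rowseq t' s = rowseq t s) ->
  perm_eq (rowseq t' r.-1 ++ rowseq t' r) (rowseq t r.-1 ++ rowseq t r) ->
  perm_eq (flatten t') (flatten t).
Proof.
move=> Hr0 Hr Hsz Heq Hp.
have split_at : forall u : tableau, r < size u ->
    u = take r.-1 u ++ nth [::] u r.-1 :: nth [::] u r :: drop r.+1 u.
  move=> u Hu; rewrite -{1}(cat_take_drop r.-1 u) (drop_nth [::]); last by lia.
  by rewrite prednK // (drop_nth [::] Hu).
have same_part : forall k, (k < r.-1) || (r < k) -> nth [::] t' k = nth [::] t k.
  by move=> k Hk; apply: Heq; apply/eqP; lia.
rewrite (split_at t Hr) (split_at t') ?Hsz //.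
have -> : take r.-1 t' = take r.-1 t.
  have Hr1 : r.-1 < size t by lia.
  apply: (@eq_from_nth _ [::]); rewrite !size_take Hsz // Hr1 => k Hk.
  by rewrite !nth_take ?same_part //; lia.
have -> : drop r.+1 t' = drop r.+1 t.
  apply: (@eq_from_nth _ [::]); rewrite !size_drop Hsz // => k _.
  by rewrite !nth_drop same_part //; lia.
rewrite !flatten_cat /=; apply: perm_cat => //.
by rewrite !catA; apply: perm_cat.
Qed.

Section Delta.
Variables (t : tableau) (i : nat).
Hypotheses (Hwf : wellformed t) (HD : in_D i t).

Local Notation r := (rowof t i).
Local Notation c := (colof t i).
Local Notation j := (entry t r.-1 c).
Local Notation U := (rowseq t r.-1).
Local Notation R := (rowseq t r).

Let Hsh : sorted geq (shape t). Proof. by case/and4P: Hwf. Qed.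
Let Hu : uniq (flatten t). Proof. by case/and4P: Hwf. Qed.
Let Hi : i \in flatten t. Proof. by case/and5P: HD. Qed.
Let Hr0 : 0 < r. Proof. by case/and5P: HD. Qed.

Lemma r_size : r < size t. Proof. by case: (flatten_pos Hi). Qed.
Lemma c_size : c < size R. Proof. by case: (flatten_pos Hi). Qed.
Lemma entry_i : entry t r c = i. Proof. by case: (flatten_pos Hi). Qed.
Lemma size_R_U : size R <= size U.
Proof. by apply: size_rowseq_mono => //; exact: leq_pred. Qed.
Lemma r1_size : r.-1 < size t. Proof. by have := r_size; lia. Qed.
Lemma c_size_U : c < size U. Proof. exact: leq_trans c_size size_R_U. Qed.
Lemma pos_j : rowof t j = r.-1 /\ colof t j = c.
Proof. exact: pos_entry Hu r1_size c_size_U. Qed.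
Lemma j_mem : j \in flatten t. Proof. exact: entry_mem r1_size c_size_U. Qed.

Lemma i_neq_j : i != j.
Proof.
apply/eqP => E; have := entry_inj Hu r_size c_size r1_size c_size_U.
by rewrite entry_i => /(_ E) [E1 _]; have := Hr0; lia.
Qed.

Lemma size_delta : size (delta i t) = size t.
Proof. by rewrite size_mkseq. Qed.

Lemma rowseq_delta s : rowseq (delta i t) s =
  if s == r then take c.+1 U ++ drop c.+1 R
  else if s == r.-1 then take c.+1 R ++ drop c.+1 U else rowseq t s.
Proof.
have := r_size; case: (ltnP s (size t)) => Hs Hr.
  by rewrite /rowseq /delta nth_mkseq.
rewrite /rowseq nth_default ?size_delta //.
have -> : (s == r) = false by lia.
have -> : (s == r.-1) = false by lia.
by rewrite nth_default.
Qed.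

Lemma size_rowseq_delta s : size (rowseq (delta i t) s) = size (rowseq t s).
Proof.
have := c_size; have := size_R_U => H1 H2.
rewrite rowseq_delta; case: eqP => [->|_]; last case: eqP => [->|_] //.
  by rewrite size_cat size_takel ?size_drop; lia.
by rewrite size_cat size_takel ?size_drop; lia.
Qed.

Lemma entry_delta s d : entry (delta i t) s d =
  if (s == r) && (d <= c) then entry t r.-1 d
  else if (s == r.-1) && (d <= c) then entry t r d else entry t s d.
Proof.
have := c_size; have := size_R_U => H1 H2.
rewrite /entry rowseq_delta; case: eqP => [->|_]; last case: eqP => [->|_] //=.
  rewrite nth_cat size_takel; last by lia.
  case: (leqP d c) => Hd /=; first by rewrite ltnS Hd nth_take.
  by rewrite ltnNge Hd /= nth_drop subnKC //; case: ifP.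
rewrite nth_cat size_takel; last by lia.
case: (leqP d c) => Hd /=; first by rewrite ltnS Hd nth_take.
by rewrite ltnNge Hd /= nth_drop subnKC.
Qed.

Lemma perm_delta : perm_eq (flatten (delta i t)) (flatten t).
Proof.
apply: (flatten_perm2 Hr0 r_size size_delta).
  by move=> s /negbTE A /negbTE B; rewrite rowseq_delta A B.
have Er1 : (r.-1 == r) = false by apply/eqP; lia.
rewrite !rowseq_delta eqxx Er1 eqxx.
apply/permP => p; rewrite !count_cat.
have split_count (s : seq nat) : count p s = count p (take c.+1 s) + count p (drop c.+1 s).
  by rewrite -count_cat cat_take_drop.
rewrite (split_count U) (split_count R); lia.
Qed.

Lemma uniq_delta : uniq (flatten (delta i t)).
Proof. by rewrite (perm_uniq perm_delta). Qed.

Lemma mem_delta x : (x \in flatten (delta i t)) = (x \in flatten t).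
Proof. exact: perm_mem perm_delta x. Qed.

Definition delta_row (s d : nat) : nat :=
  if d <= c then (if s == r then r.-1 else if s == r.-1 then r else s) else s.

Lemma delta_row_entry s d : s < size t -> d < size (rowseq t s) ->
  [/\ delta_row s d < size t, d < size (rowseq t (delta_row s d)) &
      entry (delta i t) (delta_row s d) d = entry t s d].
Proof.
move=> Hs Hd; have := c_size; have := size_R_U; have := r_size => H1 H2 H3.
have Er1 : (r.-1 == r) = false by apply/eqP; lia.
rewrite /delta_row entry_delta; case: (leqP d c) => Hdc /=; last by rewrite !andbF.
case: (eqVneq s r) => [->|Hsr]; first by rewrite Er1 eqxx /=; split => //; lia.
case: (eqVneq s r.-1) => [->|Hsr1]; first by rewrite eqxx /=; split => //; lia.
by rewrite (negbTE Hsr) (negbTE Hsr1).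
Qed.

Lemma pos_delta x : x \in flatten t ->
  let s := rowof t x in let d := colof t x in
  [/\ colof (delta i t) x = d, rowof (delta i t) x = delta_row s d,
      has_right (delta i t) x = (d.+1 < size (rowseq t (delta_row s d))) &
      right_nb (delta i t) x = entry (delta i t) (delta_row s d) d.+1].
Proof.
move=> Hx s d; have [A1 A2 A3] := flatten_pos Hx.
have [B1 B2 B3] := delta_row_entry A1 A2.
rewrite -size_delta in B1; rewrite -size_rowseq_delta in B2.
have [C1 C2] := pos_entry uniq_delta B1 B2.
rewrite B3 A3 in C1 C2.
by rewrite /has_right /right_nb C1 C2 size_rowseq_delta.
Qed.

Lemma pos_delta_i : [/\ rowof (delta i t) i = r.-1, colof (delta i t) i = c,
  has_right (delta i t) i = has_right t j & right_nb (delta i t) i = right_nb t j].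
Proof.
have [A1 A2 A3 A4] := pos_delta Hi; rewrite /delta_row leqnn eqxx in A1 A2 A3 A4.
have [J1 J2] := pos_j.
by rewrite A1 A2 A3 A4 /has_right /right_nb J1 J2 entry_delta ltnn !andbF.
Qed.

Lemma pos_delta_j : [/\ rowof (delta i t) j = r, colof (delta i t) j = c,
  has_right (delta i t) j = has_right t i & right_nb (delta i t) j = right_nb t i].
Proof.
have [J1 J2] := pos_j; have Er1 : (r.-1 == r) = false by apply/eqP; lia.
have [A1 A2 A3 A4] := pos_delta j_mem.
rewrite J1 J2 /delta_row leqnn Er1 eqxx in A1 A2 A3 A4.
by rewrite A1 A2 A3 A4 /has_right /right_nb entry_delta ltnn !andbF.
Qed.

Lemma pos_delta_other x : x \in flatten t -> x != i -> x != j ->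
  [/\ colof (delta i t) x = colof t x, has_right (delta i t) x = has_right t x,
      right_nb (delta i t) x = right_nb t x &
      rowof (delta i t) x = rowof t x \/
      [/\ colof t x < c, has_right t x, r.-1 <= rowof t x <= r &
          r.-1 <= rowof (delta i t) x <= r]].
Proof.
move=> Hx Hxi Hxj; have [A1 A2 A3 A4] := pos_delta Hx.
have [P1 P2 P3] := flatten_pos Hx.
have := c_size; have := size_R_U => H1 H2.
move: A2 A3 A4; rewrite A1 /delta_row /has_right /right_nb.
set s := rowof t x; set d := colof t x; move: P1 P2 P3; rewrite -/s -/d => P1 P2 P3.
case: (leqP d c) => Hdc; last first.
  move=> -> -> ->; rewrite entry_delta.
  have -> : (d < c) = false by lia.
  by rewrite !andbF; split => //; left.
case: (eqVneq s r) => [Es|Hsr].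
  have Hd : d < c.
    by rewrite ltn_neqAle Hdc andbT; apply: contraNneq Hxi => E; rewrite -P3 Es E entry_i.
  move=> -> -> ->; have Er1 : (r.-1 == r) = false by apply/eqP; lia.
  rewrite entry_delta Er1 eqxx /= Hd Es; split => //; first by apply/idP/idP; lia.
  by right; split => //; lia.
case: (eqVneq s r.-1) => [Es|Hsr1].
  have Hd : d < c.
    by rewrite ltn_neqAle Hdc andbT; apply: contraNneq Hxj => E; rewrite -P3 Es E.
  move=> -> -> ->; rewrite entry_delta eqxx /= Hd Es; split => //.
    by apply/idP/idP; lia.
  by right; split => //; lia.
by move=> -> -> ->; rewrite entry_delta (negbTE Hsr) (negbTE Hsr1); split => //; left.
Qed.

(* An entry strictly left of column c with no right neighbour lies in a row
   shorter than row r, hence below it. *)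
Lemma no_right_below z : z \in flatten t -> ~~ has_right t z -> colof t z < c ->
  r < rowof t z.
Proof.
move=> Hz Hh Hcz; rewrite ltnNge; apply/negP => Hle.
have := size_rowseq_mono Hsh Hle; have := c_size; move: Hh; rewrite /has_right; lia.
Qed.

Lemma after_delta_other x y : x \in flatten t -> x != i -> x != j ->
  y \in flatten t -> y != i -> y != j -> colof t x = colof t y ->
  after (delta i t) x y = after t x y.
Proof.
move=> Hx Hxi Hxj Hy Hyi Hyj Hcxy.
have [X1 X2 X3 X4] := pos_delta_other Hx Hxi Hxj.
have [Y1 Y2 Y3 Y4] := pos_delta_other Hy Hyi Hyj.
rewrite /after X2 X3 Y2 Y3.
case Hhx: (has_right t x); case Hhy: (has_right t y) => //=.
- case: Y4 => [->|[]]; last by rewrite Hhy.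
  case: X4 => [->//|[Hc _ Hx1 Hx2]].
  have Hcy : colof t y < c by rewrite -Hcxy.
  have Hbelow := no_right_below Hy (negbT Hhy) Hcy.
  by apply/idP/idP; clear -Hbelow Hx1 Hx2; lia.
- case: X4 => [->|[]]; last by rewrite Hhx.
  case: Y4 => [->//|[Hc _ Hy1 Hy2]].
  have Hcx : colof t x < c by rewrite Hcxy.
  have Hbelow := no_right_below Hx (negbT Hhx) Hcx.
  by apply/idP/idP; clear -Hbelow Hy1 Hy2; lia.
- case: X4 => [->|[]]; last by rewrite Hhx.
  by case: Y4 => [->|[]]; last by rewrite Hhy.
Qed.

Lemma same_col_delta a b : same_col (delta i t) a b = same_col t a b.
Proof.
rewrite /same_col !mem_delta.
case Ha: (a \in flatten t) => //; case Hb: (b \in flatten t) => //=.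
by have [-> _ _ _] := pos_delta Ha; have [-> _ _ _] := pos_delta Hb.
Qed.

Lemma is_inv_delta a b :
  is_inv (delta i t) a b = [&& a < b, same_col t a b & after (delta i t) a b].
Proof. by rewrite is_invE same_col_delta. Qed.

Lemma after_delta_ij :
  after (delta i t) i j = after t j i /\ after (delta i t) j i = after t i j.
Proof.
have [I1 _ I3 I4] := pos_delta_i; have [J1 _ J3 J4] := pos_delta_j; have [K1 _] := pos_j.
by rewrite /after I1 I3 I4 J1 J3 J4 K1.
Qed.

Lemma after_delta_k k : k \in flatten t -> k != i -> k != j -> colof t k = c ->
  [/\ after (delta i t) i k = after t j k, after (delta i t) k i = after t k j,
      after (delta i t) j k = after t i k & after (delta i t) k j = after t k i].
Proof.
move=> Hk Hki Hkj Hck.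
have [I1 _ I3 I4] := pos_delta_i; have [J1 _ J3 J4] := pos_delta_j; have [K1 _] := pos_j.
have [_ X2 X3 X4] := pos_delta_other Hk Hki Hkj.
have X5 : rowof (delta i t) k = rowof t k by case: X4 => // [[]]; rewrite Hck ltnn.
by rewrite /after I1 I3 I4 J1 J3 J4 K1 X2 X3 X5.
Qed.

Lemma same_colP a b : a \in flatten t -> b \in flatten t -> colof t a = colof t b ->
  same_col t a b.
Proof. by move=> Ha Hb E; rewrite /same_col Ha Hb E eqxx. Qed.

Lemma pair_flip : (is_inv t i j : nat) + is_inv t j i +
  (is_inv (delta i t) i j + is_inv (delta i t) j i) = 1.
Proof.
have [A B] := after_delta_ij; have [_ K2] := pos_j.
rewrite !is_inv_delta !is_invE !same_colP ?j_mem ?K2 // A B.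
rewrite (after_antisym Hu Hi j_mem i_neq_j) ?K2 //.
by have := i_neq_j; case: (after t i j); case: ltngtP.
Qed.

Lemma between_after k : k \in flatten t -> colof t k = c -> k != i -> k != j ->
  minn i j < k < maxn i j -> after t i k = after t j k.
Proof.
move=> Hk Hck Hki Hkj Hbetween; have [_ K2] := pos_j.
have Hcol : k \in colseq t c by rewrite mem_colseqE // Hk Hck eqxx.
have /and5P [_ _ _ _ /allP /(_ k Hcol) /implyP /(_ Hbetween)] := HD.
rewrite !is_invE.
have Sik : forall a b, a \in flatten t -> b \in flatten t -> colof t a = c ->
    colof t b = c -> same_col t a b.
  by move=> a b Ha Hb Ea Eb; apply: same_colP; rewrite // Ea Eb.
have Ak : after t k i = ~~ after t i k.
  by apply: after_antisym Hu Hi Hk _ (esym Hck); rewrite eq_sym.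
have Bk : after t k j = ~~ after t j k.
  by apply: after_antisym Hu j_mem Hk _ _; rewrite 1?eq_sym // Hck K2.
case: (leqP i j) Hbetween => Hij Hbetween.
- rewrite !Sik ?j_mem //= Bk; case/andP: Hbetween => -> ->.
  by case: (after t i k); case: (after t j k).
- rewrite !Sik ?j_mem //= Ak; case/andP: Hbetween => -> ->.
  by case: (after t i k); case: (after t j k).
Qed.

Lemma inv_count_k k : k \in flatten t -> k != i -> k != j ->
  (is_inv (delta i t) i k : nat) + is_inv (delta i t) k i +
    is_inv (delta i t) j k + is_inv (delta i t) k j =
  (is_inv t i k : nat) + is_inv t k i + is_inv t j k + is_inv t k j.
Proof.
move=> Hk Hki Hkj; have [_ K2] := pos_j.
rewrite !is_inv_delta !is_invE.
case: (eqVneq (colof t k) c) => Hck; last first.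
  have other_col a b : colof t a != colof t b -> same_col t a b = false.
    by move=> Hab; rewrite /same_col (negbTE Hab) !andbF.
  by rewrite !other_col // ?K2 // eq_sym.
have [-> -> -> ->] := after_delta_k Hk Hki Hkj Hck.
rewrite !same_colP ?j_mem ?K2 ?Hck //=.
have Ak : after t k i = ~~ after t i k.
  by apply: after_antisym Hu Hi Hk _ (esym Hck); rewrite eq_sym.
have Bk : after t k j = ~~ after t j k.
  by apply: after_antisym Hu j_mem Hk _ _; rewrite 1?eq_sym // Hck K2.
rewrite Ak Bk; symmetry; apply: swap_count => //; first exact: i_neq_j.
by move=> Hbetween; rewrite (between_after Hk Hck Hki Hkj Hbetween).
Qed.

Lemma is_inv_delta_other a b : a \in flatten t -> a != i -> a != j ->
  b \in flatten t -> b != i -> b != j -> is_inv (delta i t) a b = is_inv t a b.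
Proof.
move=> Ha Hai Haj Hb Hbi Hbj.
rewrite is_inv_delta is_invE; case Hs: (same_col t a b); rewrite ?andbF //=.
by case/and3P: Hs => _ _ /eqP Hcab; rewrite after_delta_other.
Qed.

(* The inversion count changes by exactly one: it decreases iff {i, j}
   forms an inversion of t. *)
Lemma n_inv_delta :
  n_inv (delta i t) + 2 * (is_inv t i j || is_inv t j i) = n_inv t + 1.
Proof.
have -> : nat_of_bool (is_inv t i j || is_inv t j i) = (is_inv t i j : nat) + is_inv t j i.
  by move: pair_flip; case: (is_inv t i j); case: (is_inv t j i).
move: pair_flip; rewrite !n_invE (perm_big _ perm_delta).
under eq_bigr => a _ do rewrite (perm_big _ perm_delta).
rewrite !(sum2_split _ Hu Hi j_mem i_neq_j) !is_inv_irrefl.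
set F := [seq x <- _ | _].
have -> : \sum_(k <- F) ((is_inv (delta i t) i k : nat) + is_inv (delta i t) k i +
     is_inv (delta i t) j k + is_inv (delta i t) k j) =
   \sum_(k <- F) ((is_inv t i k : nat) + is_inv t k i + is_inv t j k + is_inv t k j).
  apply: eq_big_seq => k; rewrite mem_filter => /andP [/andP [Hki Hkj] Hk].
  exact: inv_count_k.
have -> : \sum_(a <- F) \sum_(b <- F) (is_inv (delta i t) a b : nat) =
    \sum_(a <- F) \sum_(b <- F) (is_inv t a b : nat).
  apply: eq_big_seq => a; rewrite mem_filter => /andP [/andP [Hai Haj] Ha].
  apply: eq_big_seq => b; rewrite mem_filter => /andP [/andP [Hbi Hbj] Hb].
  by rewrite is_inv_delta_other.
set S4 := \sum_(k <- F) _; set S2 := \sum_(a <- F) _.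
set p := (is_inv t i j : nat) + is_inv t j i.
set q := (is_inv (delta i t) i j : nat) + is_inv (delta i t) j i.
by move=> Hpq; rewrite -Hpq; lia.
Qed.

(* delta_i permutes the entries within each column, so it does not change the
   standardization. *)
Lemma st_delta : st (delta i t) = st t.
Proof.
rewrite /st size_delta; apply: eq_mkseq => s; rewrite size_rowseq_delta.
apply: eq_mkseq => d; congr nth.
apply/perm_sortP; [exact: leq_total | exact: leq_trans | exact: anti_leq |].
apply: uniq_perm; [exact: subseq_uniq (colseq_subseq _ d) uniq_delta
                  | exact: subseq_uniq (colseq_subseq _ d) Hu |].
move=> x; rewrite !mem_colseqE // ?uniq_delta // mem_delta.
by case Hx: (x \in flatten t) => //=; have [-> _ _ _] := pos_delta Hx.
Qed.

(* Conditions (1)-(2) of D_i are exactly what keeps the rows increasing. *)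
Lemma rows_delta : all (sorted ltn) (delta i t).
Proof.
have Hrows : all (sorted ltn) t by case/and4P: Hwf.
have /and5P [_ _ Hright_i Hright_j _] := HD.
have [J1 J2] := pos_j; have := c_size; have := size_R_U => H1 H2.
apply/(all_nthP [::]) => s; rewrite size_delta => Hs.
apply/(sortedP 0) => d; rewrite -/(rowseq _ s) size_rowseq_delta => Hd.
rewrite -/(entry _ s d) -/(entry _ s d.+1) !entry_delta.
case: (eqVneq s r) Hd => [->|Hsr] Hd /=.
  case: (ltngtP d c) => Hdc; rewrite ?andbF /=.
  - exact: entry_row_lt Hrows (ltnSn d) (leq_ltn_trans Hdc c_size_U).
  - exact: entry_row_lt Hrows (ltnSn d) Hd.
  - by move: Hright_i; rewrite /has_right /right_nb -Hdc Hd => /implyP; apply.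
case: (eqVneq s r.-1) Hd => [->|Hsr1] Hd /=; last exact: entry_row_lt Hrows (ltnSn d) Hd.
case: (ltngtP d c) => Hdc; rewrite ?andbF /=.
- exact: entry_row_lt Hrows (ltnSn d) (leq_ltn_trans Hdc c_size).
- exact: entry_row_lt Hrows (ltnSn d) Hd.
- rewrite Hdc entry_i; rewrite Hdc in Hd.
  by move: Hright_j; rewrite /has_right /right_nb J1 J2 Hd => /implyP; apply.
Qed.

Lemma shape_delta : shape (delta i t) = shape t.
Proof.
have Hsize : size (shape (delta i t)) = size (shape t).
  by rewrite /shape !(size_map size) size_delta.
apply: (@eq_from_nth _ 0 _ _ Hsize) => s; rewrite Hsize /shape (size_map size t) => Hs.
rewrite (nth_map [::] 0 size (s := delta i t)) ?size_delta //.
by rewrite (nth_map [::] 0 size (s := t)) //; exact: size_rowseq_delta.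
Qed.

Lemma wellformed_delta : wellformed (delta i t).
Proof.
have H0 : 0 \notin flatten t by case/and4P: Hwf.
by rewrite /wellformed shape_delta Hsh uniq_delta mem_delta H0 rows_delta.
Qed.

End Delta.

Definition col_sorted_at (t : tableau) (d : nat) : Prop :=
  forall s, s.+1 < size t -> d < size (rowseq t s.+1) -> entry t s d < entry t s.+1 d.

Lemma col_sorted_lt t d s1 s2 : sorted geq (shape t) -> col_sorted_at t d ->
  s1 < s2 -> s2 < size t -> d < size (rowseq t s2) -> entry t s1 d < entry t s2 d.
Proof.
move=> Hsh Hcs; elim: s2 => [|n IH] // H1 H2 H3.
case: (eqVneq s1 n) => [->|Hne]; first exact: Hcs.
have H3' : d < size (rowseq t n) by apply: leq_trans H3 (size_rowseq_mono Hsh (leqnSn n)).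
apply: ltn_trans (IH _ _ H3') (Hcs n H2 H3); lia.
Qed.

Lemma after_col_sorted t x y : sorted geq (shape t) -> uniq (flatten t) ->
  col_sorted_at t (colof t x).+1 -> x \in flatten t -> y \in flatten t -> x != y ->
  colof t x = colof t y -> after t x y = (rowof t y < rowof t x).
Proof.
move=> Hsh Hu Hcs Hx Hy Hxy Hc.
have [X1 X2 X3] := flatten_pos Hx; have [Y1 Y2 Y3] := flatten_pos Hy.
have Hr : rowof t x != rowof t y by apply: contraNneq Hxy => E; rewrite -X3 -Y3 E Hc.
rewrite /after /has_right /right_nb -Hc.
case Hhx: (_ < size (rowseq t (rowof t x))) => //=.
case Hhy: (_ < size (rowseq t (rowof t y))) => //=.
case: (ltngtP (rowof t x) (rowof t y)) Hr => // Hlt _.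
  by have := col_sorted_lt Hsh Hcs Hlt Y1 Hhy; case: ltngtP.
by have := col_sorted_lt Hsh Hcs Hlt X1 Hhx; case: ltngtP.
Qed.

Lemma n_inv_col_sorted t : wellformed t -> (forall d, col_sorted_at t d) -> n_inv t = 0.
Proof.
move=> /and4P [Hsh Hu _ _] Hcs.
rewrite n_invE; apply: big1_seq => a /andP [_ Ha]; apply: big1_seq => b /andP [_ Hb].
rewrite is_invE; case Hab: (a < b) => //=; case Hs: (same_col t a b) => //=.
have Hc : colof t a = colof t b by case/and3P: Hs => _ _ /eqP.
rewrite after_col_sorted //; last by rewrite neq_ltn Hab.
case Hlt: (rowof t b < rowof t a) => //.
have [A1 A2 A3] := flatten_pos Ha; have [B1 B2 B3] := flatten_pos Hb.
by have := col_sorted_lt Hsh (Hcs (colof t a)) Hlt A1 A2; rewrite A3 Hc B3; lia.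
Qed.

Lemma nth_colseq t d s : sorted geq (shape t) -> s < size t -> d < size (rowseq t s) ->
  nth 0 (colseq t d) s = entry t s d.
Proof.
elim: t s => [|row t IH] s //= Hsh Hs Hd.
have Hd0 : d < size row.
  exact: leq_trans Hd (@size_rowseq_mono (row :: t) 0 s Hsh (leq0n s)).
rewrite /colseq /= Hd0; case: s Hs Hd => [|s] //= Hs Hd.
by apply: IH => //; apply: path_sorted Hsh.
Qed.

Lemma size_colseq t d s : sorted geq (shape t) -> s < size (colseq t d) ->
  s < size t /\ d < size (rowseq t s).
Proof.
elim: t s => [|row t IH] s //= Hsh.
have Hsh' : sorted geq (shape t) by apply: path_sorted Hsh.
rewrite /colseq /=; case: ifP => Hd0 /=.
  by case: s => [|s] //= Hs; have [] := IH s Hsh' Hs.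
move=> Hs; have [A B] := IH s Hsh' Hs.
have := @size_rowseq_mono (row :: t) 0 s.+1 Hsh (leq0n _); rewrite /rowseq /= => H.
by move: (leq_trans B H); rewrite Hd0.
Qed.

Lemma st_col_sorted t : wellformed t -> (forall d, col_sorted_at t d) -> st t = t.
Proof.
move=> /and4P [Hsh _ _ _] Hcs.
rewrite /st -[RHS](mkseq_nth [::] t); apply: eq_mkseq => s.
apply: (@eq_from_nth _ 0); first by rewrite size_mkseq.
move=> d; rewrite size_mkseq => Hd.
have Hs : s < size t by case: ltnP => // ?; move: Hd; rewrite /rowseq nth_default.
rewrite nth_mkseq // sorted_sort; [exact: nth_colseq | exact: leq_trans |].
apply/(sortedP 0) => k Hk; have [A B] := size_colseq Hsh Hk.
have B' : d < size (rowseq t k) by apply: leq_trans B (size_rowseq_mono Hsh (leqnSn k)).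
by rewrite !nth_colseq //; [exact: ltnW (Hcs d k A B) | exact: ltn_trans A].
Qed.

Lemma size_rowseq_st t s : size (rowseq (st t) s) = size (rowseq t s).
Proof.
case: (ltnP s (size t)) => Hs; first by rewrite /rowseq /st nth_mkseq // size_mkseq.
by rewrite /rowseq !nth_default ?size_mkseq.
Qed.

Lemma st_col_sorted_at t : wellformed (st t) -> forall d, col_sorted_at (st t) d.
Proof.
move=> /and4P [Hsh Hu H0 _] d s; rewrite size_mkseq => Hs; rewrite size_rowseq_st => Hd.
have Hs' : s < size t by apply: ltn_trans Hs.
have Hd' : d < size (rowseq t s).
  rewrite -size_rowseq_st; apply: leq_trans (size_rowseq_mono Hsh (leqnSn s)).
  by rewrite size_rowseq_st.
set S := sort leq (colseq t d).
have E1 : entry (st t) s d = nth 0 S s by rewrite /entry /rowseq /st !nth_mkseq.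
have E2 : entry (st t) s.+1 d = nth 0 S s.+1 by rewrite /entry /rowseq /st !nth_mkseq.
have Hz : s.+1 < size S.
  rewrite ltnNge; apply/negP => H.
  have : entry (st t) s.+1 d \in flatten (st t).
    by apply: entry_mem; rewrite ?size_mkseq ?size_rowseq_st.
  by rewrite E2 nth_default // (negbTE H0).
have Hle : nth 0 S s <= nth 0 S s.+1.
  apply: (sorted_leq_nth leq_trans leqnn 0 (sort_sorted leq_total _)); rewrite ?inE //.
  exact: ltn_trans Hz.
have Hne : entry (st t) s d != entry (st t) s.+1 d.
  apply/eqP => E; have := @entry_inj (st t) s d s.+1 d Hu.
  by rewrite !size_mkseq !size_rowseq_st => /(_ Hs' Hd' Hs Hd E) [/eqP]; lia.
by rewrite ltn_neqAle Hne E1 E2 Hle.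
Qed.

Definition col_descent (t : tableau) (d : nat) : bool :=
  has (fun s => (d < size (rowseq t s.+1)) && (entry t s.+1 d < entry t s d))
      (iota 0 (size t)).

Lemma col_sorted_no_descent t d :
  wellformed t -> ~~ col_descent t d -> col_sorted_at t d.
Proof.
move=> /and4P [Hsh Hu _ _] /hasPn Hn s Hs Hd.
have Hs' : s < size t by apply: ltn_trans Hs.
have Hd' : d < size (rowseq t s) by apply: leq_trans Hd (size_rowseq_mono Hsh (leqnSn s)).
have := Hn s; rewrite mem_iota Hs' Hd /= -leqNgt => /(_ isT) Hle.
rewrite ltn_neqAle Hle andbT; apply/eqP => E.
by have [] := entry_inj Hu Hs' Hd' Hs Hd E; lia.
Qed.

(* Descents only occur in columns of the first row; hence there is a
   rightmost one. *)
Lemma col_descent_width t d : sorted geq (shape t) -> col_descent t d ->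
  d < size (rowseq t 0).
Proof.
by move=> Hsh /hasP [s _ /andP [Hd _]]; apply: leq_trans Hd (size_rowseq_mono Hsh _).
Qed.

(* If column c has a descent at rows s, s+1 and column c+1 is sorted (as for
   the rightmost column with a descent), the lower entry i of the descent
   lies in D_i and forms an inversion with the entry above it. *)
Lemma descent_in_D t c s : wellformed t -> s.+1 < size t -> c < size (rowseq t s.+1) ->
  entry t s.+1 c < entry t s c -> col_sorted_at t c.+1 ->
  in_D (entry t s.+1 c) t /\ is_inv t (entry t s.+1 c) (entry t s c).
Proof.
move=> Hwf Hs Hc Hlt Hcs; have /and4P [Hsh Hu _ Hrows] := Hwf.
set i := entry t s.+1 c; set j := entry t s c.
have Hs' : s < size t by apply: ltn_trans Hs.
have Hc' : c < size (rowseq t s) by apply: leq_trans Hc (size_rowseq_mono Hsh (leqnSn s)).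
have [Ri Ci] := pos_entry Hu Hs Hc; have [Rj Cj] := pos_entry Hu Hs' Hc'.
have Hi : i \in flatten t := entry_mem Hs Hc.
have Hj : j \in flatten t := entry_mem Hs' Hc'.
have after_c x y : x \in flatten t -> y \in flatten t -> x != y -> colof t x = c ->
    colof t y = c -> after t x y = (rowof t y < rowof t x).
  by move=> Hx Hy Hxy Ex Ey; apply: after_col_sorted; rewrite ?Ex ?Ey.
have same_c x y : x \in flatten t -> y \in flatten t -> colof t x = c ->
    colof t y = c -> same_col t x y.
  by move=> Hx Hy Ex Ey; rewrite /same_col Hx Hy Ex Ey eqxx.
have Hij : i != j by rewrite neq_ltn Hlt.
have Hrow : rowof t j < rowof t i by rewrite Ri Rj.
split; last by rewrite is_invE Hlt same_c // after_c.
rewrite /in_D Ri Ci /= -/j Hi /=; apply/and3P; split.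
- apply/implyP; rewrite /has_right /right_nb Ri Ci => Hh.
  have Hh' : c.+1 < size (rowseq t s) by apply: leq_trans Hh (size_rowseq_mono Hsh (leqnSn s)).
  exact: ltn_trans (entry_row_lt Hrows (ltnSn c) Hh') (Hcs s Hs Hh).
- apply/implyP; rewrite /has_right /right_nb Rj Cj => Hh.
  exact: ltn_trans Hlt (entry_row_lt Hrows (ltnSn c) Hh).
- apply/allP => k; rewrite mem_colseqE // => /andP [Hk /eqP Ck].
  rewrite (minn_idPl (ltnW Hlt)) (maxn_idPr (ltnW Hlt)).
  apply/implyP => /andP [Hik Hkj].
  have Hik' : i != k by rewrite neq_ltn Hik.
  have Hkj' : k != j by rewrite neq_ltn Hkj.
  rewrite !is_invE Hik Hkj !same_c //= !after_c //.
  by rewrite Ri Rj ltnS; case: leqP.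
Qed.

Lemma descent_move t : wellformed t -> (exists d, col_descent t d) ->
  exists i, in_D i t /\ n_inv (delta i t) + 1 = n_inv t.
Proof.
move=> Hwf exd; have /and4P [Hsh Hu _ _] := Hwf.
have [c /hasP [s _ /andP [Hc Hlt]] Hmax] :=
  ex_maxnP exd (fun d Hd => ltnW (col_descent_width Hsh Hd)).
have Hs : s.+1 < size t by case: ltnP => // ?; move: Hc; rewrite /rowseq nth_default.
have Hcs : col_sorted_at t c.+1.
  by apply: col_sorted_no_descent => //; apply/negP => /Hmax; rewrite ltnn.
have [HD Hinv] := descent_in_D Hwf Hs Hc Hlt Hcs.
exists (entry t s.+1 c); split => //.
have [Ri Ci] := pos_entry Hu Hs Hc.
by have := n_inv_delta Hwf HD; rewrite Ri Ci /= Hinv; lia.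
Qed.

Lemma descent_or_sorted t : wellformed t ->
  (exists d, col_descent t d) \/ (forall d, col_sorted_at t d).
Proof.
move=> Hwf; have /and4P [Hsh _ _ _] := Hwf.
case: (boolP (has (col_descent t) (iota 0 (size (rowseq t 0))))) => [/hasP [d _ Hd]|Hn].
  by left; exists d.
right=> d; apply: col_sorted_no_descent => //; apply/negP => Hd.
by move/hasPn: Hn => /(_ d); rewrite mem_iota col_descent_width // Hd => /(_ isT).
Qed.

Lemma apply_deltas_cat s1 s2 t : apply_deltas (s1 ++ s2) t =
  if apply_deltas s2 t is Some u then apply_deltas s1 u else None.
Proof. by elim: s1 => [|i s1 IH] /=; rewrite ?IH; case: (apply_deltas s2 t). Qed.

Lemma apply_deltas_invariant s t v : wellformed t -> apply_deltas s t = Some v ->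
  [/\ wellformed v, st v = st t & n_inv t <= size s + n_inv v].
Proof.
elim: s v => [|i s IH] v Hwf /=; first by case=> <-.
case E: (apply_deltas s t) => [u|] //; case HD: (in_D i u) => //; case=> <-.
have [Hu Hst Hn] := IH u Hwf E; have := n_inv_delta Hu HD.
by split; [exact: wellformed_delta | rewrite st_delta | lia].
Qed.

Lemma reach_st n t : wellformed t -> n_inv t = n ->
  exists s, apply_deltas s t = Some (st t) /\ size s = n.
Proof.
elim: n t => [|n IH] t Hwf Hn; case: (descent_or_sorted Hwf) => [exd|Hsorted].
- by have [i [_]] := descent_move Hwf exd; lia.
- by exists [::]; rewrite st_col_sorted.
- have [i [HD Hdec]] := descent_move Hwf exd.
  have Hn' : n_inv (delta i t) = n by lia.
  have [s [Hs Hsize]] := IH _ (wellformed_delta Hwf HD) Hn'.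
  exists (s ++ [:: i]); split; last by rewrite size_cat Hsize addn1.
  by rewrite apply_deltas_cat /= HD Hs st_delta.
- by move: Hn; rewrite n_inv_col_sorted.
Qed.

Theorem proposition2p2 (lam : seq nat) (t : tableau) :
  is_partition lam -> row_standard lam t ->
  (exists s : seq nat, apply_deltas s t = Some (st t) /\ size s = n_inv t) /\
  (forall s : seq nat, apply_deltas s t = Some (st t) -> n_inv t <= size s).
Proof.
move=> Hlam Ht; have Hwf := row_standard_wellformed Hlam Ht.
split=> [|s Hs]; first exact: reach_st.
have [Hwf_st _ Hle] := apply_deltas_invariant Hwf Hs.
by rewrite (n_inv_col_sorted Hwf_st (st_col_sorted_at Hwf_st)) addn0 in Hle.
Qed.
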